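(* At every point $R\in V_N$ with $q(R)>0$, the curvature tensor $$S_{pqrs}=C_{tqr}\,C_p{}^t{}_s-C_{tqs}\,C_p{}^t{}_r,\qquad C_p{}^t{}_s=g^{tu}C_{pus},$$ of the Finsleroid metric function is $$S_{pqrs}=S^*\,\frac{h_{pr}h_{qs}-h_{ps}h_{qr}}{K^2}\quad\text{with}\quad S^*=-\frac14g^2 .$$
   Context: Let $N\ge2$, $V_N=\mathbb{R}^N$ with points $R=(R^1,\dots,R^N)$, $Z=R^N$; indices $a,b$ run over $1,\dots,N-1$, indices $p,q,r,s,t,u$ over $1,\dots,N$, repeated indices summed. Fix a symmetric positive-definite matrix $(r_{ab})$, $q(R)=\sqrt{r_{ab}R^aR^b}$. Fix $g\in(-2,2)$, $h=\sqrt{1-g^2/4}$, $G=g/h$. Define $B(g;R)=Z^2+gqZ+q^2$, $A(g;R)=Z+\frac12gq$, $\Phi(g;R)=\arctan(A/(hq))$ for $q>0$ ($\Phi=\pm\pi/2$ if $q=0$, $Z\gtrless0$), $J=e^{\frac12G\Phi}$, and $K(g;R)=\sqrt{B}\,J$. Let $g_{pq}=\frac12\partial^2K^2/\partial R^p\partial R^q$ with inverse $g^{pq}$, $R_p=\frac12\partial K^2/\partial R^p$, $h_{pq}=g_{pq}-R_pR_q/K^2$, and Cartan tensor $C_{pqr}=\frac12\partial g_{pq}/\partial R^r$. *)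

From HB Require Import structures.
From mathcomp Require Import all_boot all_order all_algebra.
From mathcomp Require Import all_classical all_reals all_analysis.
Set Implicit Arguments. Unset Strict Implicit. Unset Printing Implicit Defensive.
Import Order.TTheory GRing.Theory Num.Theory.
Import numFieldNormedType.Exports.
Local Open Scope ring_scope.

Section Finsleroid.
Variable R : realType.
Variable n : nat. (* N = n.+1 ; indices a over 'I_n, indices p over 'I_n.+1 *)
Implicit Types (x : 'rV[R]_n.+1) (r : 'M[R]_n) (g : R).

Definition Ra x (a : 'I_n) : R := x 0 (widen_ord (leqnSn n) a).
Definition Zc x : R := x 0 ord_max.

Definition qf r x : R := Num.sqrt (\sum_(a < n) \sum_(b < n) r a b * Ra x a * Ra x b).

Definition hpar g : R := Num.sqrt (1 - g ^+ 2 / 4).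
Definition Gpar g : R := g / hpar g.

Definition Bf r g x : R := Zc x ^+ 2 + g * qf r x * Zc x + qf r x ^+ 2.
Definition Af r g x : R := Zc x + g * qf r x / 2.
Definition Phif r g x : R :=
  if 0 < qf r x then atan (Af r g x / (hpar g * qf r x))
  else if 0 < Zc x then pi / 2 else if Zc x < 0 then - (pi / 2) else 0.
Definition Jf r g x : R := expR (Gpar g * Phif r g x / 2).
Definition Kf r g x : R := Num.sqrt (Bf r g x) * Jf r g x.
Definition K2 r g x : R := Kf r g x ^+ 2.

Definition pd (f : 'rV[R]_n.+1 -> R) (p : 'I_n.+1) x : R :=
  'D_(delta_mx 0 p) f x.

Definition gmet r g (p q : 'I_n.+1) x : R := pd (pd (K2 r g) q) p x / 2.
Definition gmat r g x : 'M[R]_n.+1 := \matrix_(p, q) gmet r g p q x.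
Definition ginv r g x : 'M[R]_n.+1 := invmx (gmat r g x).
Definition Rlow r g (p : 'I_n.+1) x : R := pd (K2 r g) p x / 2.
Definition hang r g (p q : 'I_n.+1) x : R :=
  gmet r g p q x - Rlow r g p x * Rlow r g q x / K2 r g x.
Definition Cartan r g (p q s : 'I_n.+1) x : R := pd (gmet r g p q) s x / 2.
Definition Cmixed r g (p t s : 'I_n.+1) x : R :=
  \sum_(u < n.+1) ginv r g x t u * Cartan r g p u s x.
Definition Scurv r g (p q r' s : 'I_n.+1) x : R :=
  \sum_(t < n.+1) (Cartan r g t q r' x * Cmixed r g p t s x
                   - Cartan r g t q s x * Cmixed r g p t r' x).
End Finsleroid.

(* On the cone [q > 0] the Finsleroid function is smooth: [K^2 = B J^2] with
   [J^2 = exp (G atan (A / (h q)))].  Writing [l_p = d_p q], [m_pu = r_pu - l_p l_u]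
   (= [q d_p d_u q]), [k_p = q d_pN - Z l_p] and [Rbar_p = q l_p + (Z + g q) d_pN], the
   identities [d_p (A / (h q)) = k_p / (h q^2)] and [h^2 q^2 + A^2 = B] give
     [d_p J^2 = g J^2 k_p / B],  [R_p = J^2 Rbar_p],
     [g_pu = J^2 (m_pu + (k_p k_u + Rbar_p Rbar_u) / B)],  [h_pu = J^2 (m_pu + k_p k_u / B)],
     [C_pus = g J^2 / (2 B) (m_pu k_s + m_ps k_u + m_us k_p) + g J^2 / B^2 k_p k_u k_s].
   The covectors [m_.a], [k], [Rbar] pair simply with the vectors [L = (R^a / q, 0)],
   [K = (Z + g q) L - q e_N] and [P_b = e_b - l_b L], which gives an explicit solution
   of [g_tu X^u = C_pts], i.e. [C_p^t_s]; [g] is invertible because [r] is positive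
   definite.  Then [C_tqr C_p^t_s] is a polynomial in [m], [k], [B], [J^2] whose
   antisymmetrisation in [r, s] is [-g^2/4 (h_pr h_qs - h_ps h_qr) / K^2]. *)

From HB Require Import structures.
From mathcomp Require Import all_boot all_order all_algebra.
From mathcomp Require Import all_classical all_reals all_analysis.
From mathcomp Require Import ring lra.
Set Implicit Arguments. Unset Strict Implicit.
Import Order.TTheory GRing.Theory Num.Theory.
Import numFieldNormedType.Exports.
Local Open Scope ring_scope.

Section PointwiseCalculus.
Context {R : realType} {V : normedModType R}.
Implicit Types (f a b : V -> R) (x v : V).

Lemma derive_alongE f x v : 'D_v f x = 'D_1 (fun h : R => f (h *: v + x)) 0.
Proof.
rewrite /derive; do 2 f_equal; apply/funext => h /=.
by rewrite scale0r add0r /shift /= addr0 [h%:A]mulr1.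
Qed.

Lemma is_derive_alongP f x v df :
  is_derive (0 : R) 1 (fun h : R => f (h *: v + x)) df <-> is_derive x v f df.
Proof.
split=> -[fv dfE]; split.
- exact/derivable1P.
- by rewrite derive_alongE.
- exact: (derivable1P f x v).1 fv.
- by rewrite -dfE derive_alongE.
Qed.

Lemma is_derive_comp (G : R -> R) f x v df dG :
  is_derive x v f df -> is_derive (f x) 1 G dG ->
  is_derive x v (fun y => G (f y)) (dG * df).
Proof.
move=> /is_derive_alongP fdf GdG; apply/is_derive_alongP.
have GdG0 : is_derive ((fun h : R => f (h *: v + x)) 0) 1 G dG.
  by rewrite /= scale0r add0r.
exact: (is_derive1_comp GdG0 fdf).
Qed.

Lemma is_derive_mul a b x v da db :
  is_derive x v a da -> is_derive x v b db ->
  is_derive x v (fun y => a y * b y) (a x * db + b x * da).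
Proof. by move=> ada bdb; have := is_deriveM ada bdb. Qed.

Lemma is_derive_mull c a x v da :
  is_derive x v a da -> is_derive x v (fun y => c * a y) (c * da).
Proof.
move=> ada; eapply is_derive_eq; first exact: is_derive_mul (is_derive_cst c x v) ada.
by rewrite mulr0 addr0.
Qed.

Lemma is_derive_mulr c a x v da :
  is_derive x v a da -> is_derive x v (fun y => a y * c) (da * c).
Proof.
move=> ada; eapply is_derive_eq; first exact: is_derive_mul ada (is_derive_cst c x v).
by rewrite mulr0 add0r mulrC.
Qed.

Lemma is_derive_add a b x v da db :
  is_derive x v a da -> is_derive x v b db ->
  is_derive x v (fun y => a y + b y) (da + db).
Proof. by move=> ada bdb; have := is_deriveD ada bdb. Qed.

Lemma is_derive_sub a b x v da db :
  is_derive x v a da -> is_derive x v b db ->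
  is_derive x v (fun y => a y - b y) (da - db).
Proof. by move=> ada bdb; have := is_deriveB ada bdb. Qed.

Lemma is_derive_inv a x v da : a x != 0 ->
  is_derive x v a da -> is_derive x v (fun y => (a y)^-1) (- da / a x ^+ 2).
Proof.
move=> ax0 [av <-]; split; first exact: derivableV.
by rewrite deriveV // -[_ *: _]/(_ * _) mulNr mulrC mulNr.
Qed.

Lemma is_derive_bigsum m (a : 'I_m -> V -> R) x v (da : 'I_m -> R) :
  (forall i, is_derive x v (a i) (da i)) ->
  is_derive x v (fun y => \sum_(i < m) a i y) (\sum_(i < m) da i).
Proof.
move=> ada; have := is_derive_sum ada.
by have -> : \sum_(i < m) a i = (fun y => \sum_(i < m) a i y)
  by apply/funext => y; rewrite fct_sumE.
Qed.

Lemma derive_near_eq f f' x v df :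
  is_derive x v f' df -> (\forall y \near x, f y = f' y) -> 'D_v f x = df.
Proof. by move=> [_ <-] ff'; exact: near_eq_derive. Qed.

Lemma continuous_bigsum m (a : 'I_m -> V -> R) x :
  (forall i, {for x, continuous (a i)}) ->
  {for x, continuous (fun y => \sum_(i < m) a i y)}.
Proof.
move=> ac; rewrite unlock /=; elim: (index_enum _) => [|i s IHs] /=.
  exact: cst_continuous.
exact: continuousD.
Qed.

End PointwiseCalculus.

Ltac field_nz := field; repeat (apply/andP; split); try assumption.

Section Finsleroid.
Variables (R : realType) (n : nat) (r : 'M[R]_n) (g : R).
Hypothesis r_sym : r^T = r.
Hypothesis r_posdef : forall v : 'rV[R]_n, v != 0 -> 0 < (v *m r *m v^T) 0 0.
Hypothesis g_bound : -2 < g < 2.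

Local Notation V := 'rV[R]_n.+1.
Local Notation iZ := (@ord_max n).
Local Notation widen := (widen_ord (leqnSn n)).
Implicit Types (y : V) (p s t u : 'I_n.+1).

(* [r] padded with a zero last row and column. *)
Definition rbar p u : R :=
  match unlift iZ p, unlift iZ u with Some a, Some b => r a b | _, _ => 0 end.
Definition rvec p y := \sum_u rbar p u * y 0 u.
Definition qsq y := \sum_p rvec p y * y 0 p.
Definition eZ p : R := (p == iZ)%:R.

Lemma lift_max (a : 'I_n) : lift iZ a = widen a.
Proof. by apply: val_inj; rewrite /= /bump leqNgt ltn_ord. Qed.

Lemma rbar_Zl u : rbar iZ u = 0.
Proof. by rewrite /rbar unlift_none. Qed.

Lemma rbar_Zr p : rbar p iZ = 0.
Proof. by rewrite /rbar unlift_none; case: (unlift _ p). Qed.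

Lemma rbar_widen a b : rbar (widen a) (widen b) = r a b.
Proof. by rewrite /rbar -!lift_max !liftK. Qed.

Lemma rbarC p u : rbar p u = rbar u p.
Proof.
rewrite /rbar; case: (unlift _ p) => [a|]; case: (unlift _ u) => [b|] //.
by rewrite -{1}r_sym mxE.
Qed.

Lemma rvec_Z y : rvec iZ y = 0.
Proof. by rewrite /rvec big1 // => u _; rewrite rbar_Zl mul0r. Qed.

Lemma qfE y : qf r y = Num.sqrt (qsq y).
Proof.
rewrite /qf /qsq big_ord_recr /= rvec_Z mul0r addr0; congr Num.sqrt.
apply: eq_bigr => a _; rewrite /rvec big_ord_recr /= rbar_Zr mul0r addr0.
by rewrite mulr_suml; apply: eq_bigr => b _; rewrite rbar_widen /Ra; ring.
Qed.

Lemma sum_mul_delta (F : 'I_n.+1 -> R) s : \sum_u F u * (u == s)%:R = F s.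
Proof.
rewrite (bigD1 s) //= eqxx mulr1 big1 ?addr0 // => u /negPf ->.
by rewrite mulr0.
Qed.

Lemma sum_mul_eZ (F : 'I_n.+1 -> R) : \sum_t F t * eZ t = F iZ.
Proof. exact: sum_mul_delta. Qed.

Lemma is_derive_coord y s u :
  is_derive y 'e_s (fun z : V => z 0 u) (u == s)%:R.
Proof.
apply/is_derive_alongP.
have -> : (fun h : R => (h *: 'e_s + y) 0 u) = (fun h => h * (u == s)%:R + y 0 u).
  by apply/funext => h; rewrite !mxE eqxx.
eapply is_derive_eq; first by apply: is_derive_add.
by rewrite scaler0 add0r addr0 [_%:A]mulr1.
Qed.

Lemma is_derive_rvec y s p : is_derive y 'e_s (rvec p) (rbar p s).
Proof.
eapply is_derive_eq.
  apply: is_derive_bigsum => u.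
  exact: is_derive_mull (is_derive_coord _ _ _).
by rewrite -(sum_mul_delta (rbar p) s).
Qed.

Lemma is_derive_qsq y s : is_derive y 'e_s qsq (2 * rvec s y).
Proof.
eapply is_derive_eq.
  apply: is_derive_bigsum => u.
  exact: is_derive_mul (is_derive_rvec _ _ _) (is_derive_coord _ _ _).
rewrite big_split /= sum_mul_delta /rvec mulr2n mulrDl mul1r addrC; congr (_ + _).
by apply: eq_bigr => u _; rewrite rbarC mulrC.
Qed.

Lemma continuous_qsq y : {for y, continuous qsq}.
Proof.
apply: continuous_bigsum => p; apply: continuousM; last exact: coord_continuous.
apply: continuous_bigsum => u; apply: continuousM; first exact: cst_continuous.
exact: coord_continuous.
Qed.

Lemma near_qf_gt0 y : 0 < qf r y -> \forall z \near y, 0 < qf r z.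
Proof.
rewrite qfE sqrtr_gt0 => qy.
apply: filterS (cvgr_gt _ (@continuous_qsq y) _ qy) => z.
by rewrite qfE sqrtr_gt0.
Qed.

Lemma hpar_sqr : hpar g ^+ 2 = 1 - g ^+ 2 / 4.
Proof. by rewrite /hpar sqr_sqrtr //; case/andP: g_bound => g_gt g_lt; nra. Qed.

Lemma hpar_gt0 : 0 < hpar g.
Proof. by rewrite /hpar sqrtr_gt0; case/andP: g_bound => g_gt g_lt; nra. Qed.

Lemma Bf_sqr y : Bf r g y = hpar g ^+ 2 * qf r y ^+ 2 + Af r g y ^+ 2.
Proof. by rewrite hpar_sqr /Bf /Af; field. Qed.

Lemma Bf_gt0 y : 0 < qf r y -> 0 < Bf r g y.
Proof.
move=> qy; rewrite Bf_sqr ltr_wpDr ?sqr_ge0 //.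
by rewrite mulr_gt0 // exprn_gt0 // hpar_gt0.
Qed.

Definition lq p y := rvec p y / qf r y.
Definition kvec p y := qf r y * eZ p - Zc y * lq p y.
Definition mq p u y := rbar p u - lq p y * lq u y.
Definition Rbar p y := rvec p y + (Zc y + g * qf r y) * eZ p.
Definition J2 y := expR (Gpar g * atan (Af r g y / (hpar g * qf r y))).

Lemma mqC p u y : mq p u y = mq u p y.
Proof. by rewrite /mq rbarC mulrC. Qed.

Lemma J2_neq0 y : J2 y != 0.
Proof. by rewrite gt_eqF ?expR_gt0. Qed.

Section DerivativesOnCone.
Context {y : V} (qy : 0 < qf r y).
Let q0 : qf r y != 0. Proof. exact: lt0r_neq0. Qed.
Let B0 : Bf r g y != 0. Proof. by rewrite lt0r_neq0 ?Bf_gt0. Qed.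

Lemma is_derive_qf s : is_derive y 'e_s (qf r) (lq s y).
Proof.
have qsq_gt0 : 0 < qsq y by rewrite -sqrtr_gt0 -qfE.
have -> : qf r = (fun z => Num.sqrt (qsq z)) by apply/funext => z; rewrite qfE.
eapply is_derive_eq.
  exact: is_derive_comp (is_derive_qsq y s) (is_derive1_sqrt qsq_gt0).
by rewrite /lq qfE; field; rewrite -qfE.
Qed.

Lemma is_derive_Zc s : is_derive y 'e_s (@Zc R n) (eZ s).
Proof. by eapply is_derive_eq; [exact: is_derive_coord | rewrite /eZ eq_sym]. Qed.

Lemma is_derive_lq s p : is_derive y 'e_s (lq p) (mq p s y / qf r y).
Proof.
eapply is_derive_eq.
  exact: is_derive_mul (is_derive_rvec y s p) (is_derive_inv q0 (is_derive_qf s)).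
by rewrite /mq /lq; field.
Qed.

Lemma is_derive_kvec s p : is_derive y 'e_s (kvec p)
  (lq s y * eZ p - eZ s * lq p y - Zc y * mq p s y / qf r y).
Proof.
eapply is_derive_eq.
  exact: is_derive_sub (is_derive_mulr _ (is_derive_qf s))
                       (is_derive_mul (is_derive_Zc s) (is_derive_lq s p)).
by field.
Qed.

Lemma is_derive_mq s p u : is_derive y 'e_s (mq p u)
  (- (mq p s y * lq u y + lq p y * mq u s y) / qf r y).
Proof.
eapply is_derive_eq.
  exact: is_derive_sub (is_derive_cst _ _ _)
                       (is_derive_mul (is_derive_lq s p) (is_derive_lq s u)).
by field.
Qed.

Lemma is_derive_Rbar s p : is_derive y 'e_s (Rbar p)
  (rbar p s + (eZ s + g * lq s y) * eZ p).
Proof.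
eapply is_derive_eq.
  exact: is_derive_add (is_derive_rvec y s p)
    (is_derive_mulr _ (is_derive_add (is_derive_Zc s) (is_derive_mull g (is_derive_qf s)))).
by rewrite /=; ring.
Qed.

Lemma is_derive_Bf s : is_derive y 'e_s (Bf r g)
  ((2 * Zc y + g * qf r y) * eZ s + (g * Zc y + 2 * qf r y) * lq s y).
Proof.
have -> : Bf r g = (fun z => Zc z * Zc z + g * qf r z * Zc z + qf r z * qf r z).
  by apply/funext => z; rewrite /Bf !expr2.
eapply is_derive_eq.
  exact: is_derive_add (is_derive_add (is_derive_mul (is_derive_Zc s) (is_derive_Zc s))
    (is_derive_mul (is_derive_mull g (is_derive_qf s)) (is_derive_Zc s)))
    (is_derive_mul (is_derive_qf s) (is_derive_qf s)).
by rewrite /=; ring.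
Qed.

(* [d_s atan (A / (h q)) = h k_s / B] because [h^2 q^2 + A^2 = B]; and [G h = g]. *)
Lemma is_derive_J2 s : is_derive y 'e_s J2 (J2 y * g * kvec s y / Bf r g y).
Proof.
have h0 : hpar g != 0 by rewrite lt0r_neq0 // hpar_gt0.
have hq0 : hpar g * qf r y != 0 by rewrite mulf_neq0.
have dA := is_derive_add (is_derive_Zc s)
  (is_derive_mulr 2^-1 (is_derive_mull g (is_derive_qf s))).
have dhq := is_derive_inv (a := fun z : V => hpar g * qf r z) hq0
  (is_derive_mull (hpar g) (is_derive_qf s)).
have dat := is_derive_comp (is_derive_mul dA dhq) (is_derive1_atan _).
rewrite /J2 /Af; eapply is_derive_eq.
  exact: is_derive_comp (is_derive_mull (Gpar g) dat) (is_derive_expR _).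
rewrite Bf_sqr /J2 /Af /Gpar /kvec /lq /=.
field; rewrite q0 h0 !andbT.
suff -> : (hpar g * qf r y) ^+ 2 * 4 + (Zc y * 2 + g * qf r y) ^+ 2 = 4 * Bf r g y.
  by rewrite mulf_neq0 ?pnatr_eq0.
by rewrite Bf_sqr /Af; field.
Qed.

Lemma is_derive_BJ2 s :
  is_derive y 'e_s (fun z => Bf r g z * J2 z) (2 * J2 y * Rbar s y).
Proof.
eapply is_derive_eq; first exact: is_derive_mul (is_derive_Bf s) (is_derive_J2 s).
by rewrite /Rbar /kvec /lq /Bf; field_nz.
Qed.

End DerivativesOnCone.

Lemma K2_cone y : 0 < qf r y -> K2 r g y = Bf r g y * J2 y.
Proof.
move=> qy; rewrite /K2 /Kf /Jf /J2 /Phif qy exprMn sqr_sqrtr ?ltW ?Bf_gt0 //.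
by rewrite expr2 -expRD; congr (_ * expR _); field.
Qed.

Lemma near_cone (P : V -> Prop) y : 0 < qf r y ->
  (forall z, 0 < qf r z -> P z) -> \forall z \near y, P z.
Proof.
move=> qy PC; near=> z; apply: PC; near: z; exact: near_qf_gt0.
Unshelve. all: by end_near.
Qed.

Definition gform p u y :=
  J2 y * (mq p u y + (kvec p y * kvec u y + Rbar p y * Rbar u y) / Bf r g y).

Definition Cform p u s y :=
  g * J2 y / (2 * Bf r g y) * (mq p u y * kvec s y + mq p s y * kvec u y + mq u s y * kvec p y)
  + g * J2 y / Bf r g y ^+ 2 * (kvec p y * kvec u y * kvec s y).

Lemma pd_K2_cone y s : 0 < qf r y -> pd (K2 r g) s y = 2 * J2 y * Rbar s y.
Proof.
move=> qy; rewrite /pd (derive_near_eq (is_derive_BJ2 qy s)) //.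
exact: near_cone qy K2_cone.
Qed.

Lemma is_derive_dK2_cone y p u : 0 < qf r y ->
  is_derive y 'e_p (fun z => 2 * J2 z * Rbar u z) (2 * gform p u y).
Proof.
move=> qy; have B0 : Bf r g y != 0 by rewrite lt0r_neq0 ?Bf_gt0.
have q0 : qf r y != 0 by rewrite lt0r_neq0.
eapply is_derive_eq; first exact: is_derive_mul (is_derive_mull 2 (is_derive_J2 qy p))
                                              (is_derive_Rbar qy p u).
by rewrite /gform /mq /Rbar /kvec /lq /Bf (rbarC u p); field_nz.
Qed.

Lemma gmet_cone y p u : 0 < qf r y -> gmet r g p u y = gform p u y.
Proof.
move=> qy; rewrite /gmet /pd (derive_near_eq (is_derive_dK2_cone p u qy)).
  by rewrite mulrC mulKf // pnatr_eq0.
exact: near_cone qy (fun z qz => pd_K2_cone u qz).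
Qed.

Lemma is_derive_gform y p u s : 0 < qf r y ->
  is_derive y 'e_s (gform p u) (2 * Cform p u s y).
Proof.
move=> qy; have B0 : Bf r g y != 0 by rewrite lt0r_neq0 ?Bf_gt0.
have q0 : qf r y != 0 by rewrite lt0r_neq0.
eapply is_derive_eq.
  exact: is_derive_mul (is_derive_J2 qy s) (is_derive_add (is_derive_mq qy s p u)
    (is_derive_mul
      (is_derive_add (is_derive_mul (is_derive_kvec qy s p) (is_derive_kvec qy s u))
      (is_derive_mul (is_derive_Rbar qy s p) (is_derive_Rbar qy s u)))
      (is_derive_inv B0 (is_derive_Bf qy s)))).
by rewrite /Cform /mq /Rbar /kvec /lq /Bf; field_nz.
Qed.

Lemma Cartan_cone y p u s : 0 < qf r y -> Cartan r g p u s y = Cform p u s y.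
Proof.
move=> qy; rewrite /Cartan /pd (derive_near_eq (is_derive_gform p u s qy)).
  by rewrite mulrC mulKf // pnatr_eq0.
exact: near_cone qy (fun z qz => gmet_cone p u qz).
Qed.

Lemma hang_cone y p u : 0 < qf r y ->
  hang r g p u y = J2 y * (mq p u y + kvec p y * kvec u y / Bf r g y).
Proof.
move=> qy; have B0 : Bf r g y != 0 by rewrite lt0r_neq0 ?Bf_gt0.
rewrite /hang /Rlow !pd_K2_cone // gmet_cone // K2_cone // /gform.
by field; rewrite B0 J2_neq0.
Qed.

Definition Lvec y t := (t != iZ)%:R * y 0 t / qf r y.
Definition eoff b t : R := ((t == b) && (b != iZ))%:R.
Definition Kvec y t := (Zc y + g * qf r y) * Lvec y t - qf r y * eZ t.
Definition Pvec y b t := eoff b t - lq b y * Lvec y t.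

Lemma sum_mul_eoff (F : 'I_n.+1 -> R) b : \sum_t F t * eoff b t = F b * (b != iZ)%:R.
Proof.
rewrite /eoff; case: (b =P iZ) => [->|_] /=.
  by rewrite big1 ?mulr0 // => t _; rewrite andbF mulr0.
by rewrite mulr1; under eq_bigr do rewrite andbT; rewrite sum_mul_delta.
Qed.

Section Frame.
Context {y : V} (qy : 0 < qf r y).
Let q0 : qf r y != 0. Proof. exact: lt0r_neq0. Qed.

Lemma sum_rbar_Lvec a : \sum_t rbar t a * Lvec y t = lq a y.
Proof.
rewrite /lq /rvec /Lvec mulr_suml; apply: eq_bigr => t _.
rewrite (rbarC t a); case: (t =P iZ) => [->|_]; first by rewrite rbar_Zr !mul0r.
by rewrite mul1r mulrA.
Qed.

Lemma sum_rvec_Lvec : \sum_t rvec t y * Lvec y t = qf r y.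
Proof.
transitivity (qsq y / qf r y).
  rewrite /qsq mulr_suml; apply: eq_bigr => t _; rewrite /Lvec.
  case: (t =P iZ) => [->|_]; first by rewrite rvec_Z !mul0r.
  by rewrite mul1r mulrA.
have qsqE : qsq y = qf r y ^+ 2 by rewrite qfE sqr_sqrtr // ltW // -sqrtr_gt0 -qfE.
by rewrite qsqE expr2 mulfK.
Qed.

Lemma sum_eZ_Lvec : \sum_t eZ t * Lvec y t = 0.
Proof.
by rewrite big1 // => t _; rewrite /eZ /Lvec; case: (t =P iZ) => [->|_] /=;
  rewrite ?mul0r ?mulr0.
Qed.

(* Every covector below is a combination of [rbar _ a], [rvec _ y] and [eZ],
   and every vector one of [Lvec y], [eZ] and [eoff b]. *)
Lemma contract_frame a b c1 c2 c3 d1 d2 d3 :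
  \sum_t (c1 * rbar t a + c2 * rvec t y + c3 * eZ t)
         * (d1 * Lvec y t + d2 * eZ t + d3 * eoff b t)
  = c1 * d1 * lq a y + c1 * d3 * rbar b a + c2 * d1 * qf r y
    + c2 * d3 * rvec b y + c3 * d2.
Proof.
rewrite (eq_bigr (fun t => c1 * d1 * (rbar t a * Lvec y t) + c1 * d2 * (rbar t a * eZ t)
  + c1 * d3 * (rbar t a * eoff b t) + c2 * d1 * (rvec t y * Lvec y t)
  + c2 * d2 * (rvec t y * eZ t) + c2 * d3 * (rvec t y * eoff b t)
  + c3 * d1 * (eZ t * Lvec y t) + c3 * d2 * (eZ t * eZ t) + c3 * d3 * (eZ t * eoff b t)));
  last by move=> t _; ring.
rewrite !big_split -!mulr_sumr /= sum_rbar_Lvec sum_rvec_Lvec sum_eZ_Lvec.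
rewrite !sum_mul_eoff !sum_mul_eZ rbar_Zl rvec_Z /eZ eqxx.
by have [->|_] /= := eqVneq b iZ; rewrite ?rbar_Zl ?rvec_Z; ring.
Qed.

Ltac contract c1 c2 c3 d1 d2 d3 a b :=
  rewrite (eq_bigr (fun t => (c1 * rbar t a + c2 * rvec t y + c3 * eZ t) *
                             (d1 * Lvec y t + d2 * eZ t + d3 * eoff b t)));
  [rewrite contract_frame | move=> t _];
  rewrite /mq /kvec /Rbar /Pvec /Kvec /lq; by field.

Lemma mq_Pvec a b : \sum_t mq t a y * Pvec y b t = mq b a y.
Proof. contract (1 : R) (- lq a y / qf r y) (0 : R) (- lq b y) (0 : R) (1 : R) a b. Qed.
Lemma kvec_Pvec b : \sum_t kvec t y * Pvec y b t = 0.
Proof.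
contract (0 : R) (- Zc y / qf r y) (qf r y)
  (- lq b y) (0 : R) (1 : R)
  (@ord_max n) b.
Qed.
Lemma Rbar_Pvec b : \sum_t Rbar t y * Pvec y b t = 0.
Proof.
contract (0 : R) (1 : R) (Zc y + g * qf r y)
  (- lq b y) (0 : R) (1 : R)
  (@ord_max n) b.
Qed.
Lemma mq_Kvec a : \sum_t mq t a y * Kvec y t = 0.
Proof.
contract (1 : R) (- lq a y / qf r y) (0 : R)
  (Zc y + g * qf r y) (- qf r y) (0 : R)
  a (@ord_max n).
Qed.
Lemma kvec_Kvec : \sum_t kvec t y * Kvec y t = - Bf r g y.
Proof.
rewrite /Bf; contract (0 : R) (- Zc y / qf r y) (qf r y)
  (Zc y + g * qf r y) (- qf r y) (0 : R)
  (@ord_max n) (@ord_max n).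
Qed.
Lemma Rbar_Kvec : \sum_t Rbar t y * Kvec y t = 0.
Proof.
contract (0 : R) (1 : R) (Zc y + g * qf r y)
  (Zc y + g * qf r y) (- qf r y) (0 : R)
  (@ord_max n) (@ord_max n).
Qed.
Lemma mq_Lvec a : \sum_t mq t a y * Lvec y t = 0.
Proof.
contract (1 : R) (- lq a y / qf r y) (0 : R)
  (1 : R) (0 : R) (0 : R)
  a (@ord_max n).
Qed.
Lemma kvec_Lvec : \sum_t kvec t y * Lvec y t = - Zc y.
Proof.
contract (0 : R) (- Zc y / qf r y) (qf r y)
  (1 : R) (0 : R) (0 : R)
  (@ord_max n) (@ord_max n).
Qed.
Lemma Rbar_Lvec : \sum_t Rbar t y * Lvec y t = qf r y.
Proof.
contract (0 : R) (1 : R) (Zc y + g * qf r y)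
  (1 : R) (0 : R) (0 : R)
  (@ord_max n) (@ord_max n).
Qed.

End Frame.

Lemma sum_mul_comb3 (f1 f2 f3 h1 h2 h3 : 'I_n.+1 -> R) a1 a2 a3 b1 b2 b3 :
  \sum_t (a1 * f1 t + a2 * f2 t + a3 * f3 t) * (b1 * h1 t + b2 * h2 t + b3 * h3 t) =
  a1 * b1 * (\sum_t f1 t * h1 t) + a1 * b2 * (\sum_t f1 t * h2 t)
  + a1 * b3 * (\sum_t f1 t * h3 t) + a2 * b1 * (\sum_t f2 t * h1 t)
  + a2 * b2 * (\sum_t f2 t * h2 t) + a2 * b3 * (\sum_t f2 t * h3 t)
  + a3 * b1 * (\sum_t f3 t * h1 t) + a3 * b2 * (\sum_t f3 t * h2 t)
  + a3 * b3 * (\sum_t f3 t * h3 t).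
Proof. by rewrite !mulr_sumr -!big_split /=; apply: eq_bigr => t _; ring. Qed.

Lemma sum_comb3_mul (f1 f2 f3 h : 'I_n.+1 -> R) a1 a2 a3 :
  \sum_t (a1 * f1 t + a2 * f2 t + a3 * f3 t) * h t =
  a1 * (\sum_t f1 t * h t) + a2 * (\sum_t f2 t * h t) + a3 * (\sum_t f3 t * h t).
Proof. by rewrite !mulr_sumr -!big_split /=; apply: eq_bigr => t _; ring. Qed.

Definition Cmixed_form y p s t :=
  g / (2 * Bf r g y) * kvec s y * Pvec y p t + g / (2 * Bf r g y) * kvec p y * Pvec y s t
  + - (g / (2 * Bf r g y) * mq p s y + g / Bf r g y ^+ 2 * kvec p y * kvec s y) * Kvec y t.

Section MetricOnFrame.
Context {y : V} (qy : 0 < qf r y).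
Let B0 : Bf r g y != 0. Proof. by rewrite lt0r_neq0 ?Bf_gt0. Qed.

Lemma gmet_frameE t u : gmet r g t u y =
  J2 y * mq u t y + J2 y * kvec t y / Bf r g y * kvec u y
  + J2 y * Rbar t y / Bf r g y * Rbar u y.
Proof. by rewrite gmet_cone // /gform (mqC t u); field. Qed.

Lemma gmet_Cmixed_form p s t :
  \sum_u gmet r g t u y * Cmixed_form y p s u = Cform p t s y.
Proof.
under eq_bigr do rewrite gmet_frameE.
rewrite /Cmixed_form sum_mul_comb3 !mq_Pvec // !kvec_Pvec // !Rbar_Pvec //.
rewrite mq_Kvec // kvec_Kvec // Rbar_Kvec // /Cform (mqC s t) (mqC p t).
by field.
Qed.

Lemma gmet_Kvec t : \sum_u gmet r g t u y * Kvec y u = - J2 y * kvec t y.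
Proof.
under eq_bigr do rewrite gmet_frameE.
by rewrite sum_comb3_mul mq_Kvec // kvec_Kvec // Rbar_Kvec //; field.
Qed.

Lemma gmet_Lvec t : \sum_u gmet r g t u y * Lvec y u =
  J2 y * (qf r y * Rbar t y - Zc y * kvec t y) / Bf r g y.
Proof.
under eq_bigr do rewrite gmet_frameE.
by rewrite sum_comb3_mul mq_Lvec // kvec_Lvec // Rbar_Lvec //; field.
Qed.

End MetricOnFrame.

Lemma sum_contract (F : 'I_n.+1 -> 'I_n.+1 -> R) (u w : 'I_n.+1 -> R) :
  \sum_p (\sum_t u t * F t p) * w p = \sum_t u t * \sum_p F t p * w p.
Proof.
under eq_bigr do rewrite mulr_suml.
rewrite exchange_big /=; apply: eq_bigr => t _.
by rewrite mulr_sumr; apply: eq_bigr => p _; rewrite mulrA.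
Qed.

Section MetricKernel.
Context {y : V} (qy : 0 < qf r y) (u : 'I_n.+1 -> R).
Hypothesis u_ker : forall p, \sum_t u t * gmet r g t p y = 0.
Let q0 : qf r y != 0. Proof. exact: lt0r_neq0. Qed.
Let B0 : Bf r g y != 0. Proof. by rewrite lt0r_neq0 ?Bf_gt0. Qed.

Lemma sum_ker_mul (w : 'I_n.+1 -> R) : \sum_t u t * \sum_p gmet r g t p y * w p = 0.
Proof. by rewrite -sum_contract big1 // => p _; rewrite u_ker mul0r. Qed.

Lemma ker_kvec : \sum_t u t * kvec t y = 0.
Proof.
have := sum_ker_mul (Kvec y); under eq_bigr do rewrite gmet_Kvec // mulrCA.
by rewrite -mulr_sumr => /eqP; rewrite mulf_eq0 oppr_eq0 (negbTE (J2_neq0 y)) => /eqP.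
Qed.

Lemma ker_Rbar : \sum_t u t * Rbar t y = 0.
Proof.
have := sum_ker_mul (Lvec y); under eq_bigr do rewrite gmet_Lvec //.
have -> : \sum_t u t * (J2 y * (qf r y * Rbar t y - Zc y * kvec t y) / Bf r g y) =
    J2 y * qf r y / Bf r g y * (\sum_t u t * Rbar t y)
    - J2 y * Zc y / Bf r g y * (\sum_t u t * kvec t y).
  by rewrite !mulr_sumr -sumrB; apply: eq_bigr => t _; field.
rewrite ker_kvec mulr0 subr0 => /eqP.
by rewrite !mulf_eq0 invr_eq0 (negbTE (J2_neq0 y)) (negbTE q0) (negbTE B0) => /eqP.
Qed.

(* The pairings of [u] with [kvec] and [Rbar] form a linear system in [u iZ] and
   [\sum_t u t * lq t y] of determinant [Bf]. *)
Lemma ker_Z_lq : u iZ = 0 /\ \sum_t u t * lq t y = 0.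
Proof.
set la := \sum_t u t * lq t y.
have kE : \sum_t u t * kvec t y = qf r y * u iZ - Zc y * la.
  rewrite /la /kvec -(sum_mul_eZ u) !mulr_sumr -sumrB.
  by apply: eq_bigr => t _; ring.
have RE : \sum_t u t * Rbar t y = qf r y * la + (Zc y + g * qf r y) * u iZ.
  rewrite /la /Rbar -(sum_mul_eZ u) !mulr_sumr -big_split /=.
  by apply: eq_bigr => t _; rewrite /lq; field.
have := ker_kvec; have := ker_Rbar; rewrite kE RE => uR uk.
have uZE : Bf r g y * u iZ = Zc y * (qf r y * la + (Zc y + g * qf r y) * u iZ)
                            + qf r y * (qf r y * u iZ - Zc y * la) by rewrite /Bf; ring.
have laE : Bf r g y * la = qf r y * (qf r y * la + (Zc y + g * qf r y) * u iZ)
                 - (Zc y + g * qf r y) * (qf r y * u iZ - Zc y * la) by rewrite /Bf; ring.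
rewrite uR uk !mulr0 addr0 in uZE; rewrite uR uk !mulr0 subr0 in laE.
by split; apply: (mulfI B0); rewrite mulr0.
Qed.

Lemma ker_rbar p : \sum_t u t * rbar t p = 0.
Proof.
have := u_ker p; rewrite (eq_bigr (fun t => J2 y * (u t * rbar t p)
    + - (J2 y * lq p y) * (u t * lq t y) + J2 y * kvec p y / Bf r g y * (u t * kvec t y)
    + J2 y * Rbar p y / Bf r g y * (u t * Rbar t y))); last first.
  by move=> t _; rewrite gmet_cone // /gform /mq; field.
rewrite !big_split /= -!mulr_sumr ker_kvec ker_Rbar (proj2 ker_Z_lq) !mulr0 !addr0.
by move/eqP; rewrite mulf_eq0 (negbTE (J2_neq0 y)) => /eqP.
Qed.

Lemma ker_eq0 t : u t = 0.
Proof.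
pose v := \row_(a < n) u (widen a).
have v0 : v = 0.
  apply/eqP; apply: contraT => /r_posdef; rewrite mxE big1 ?ltxx // => b _.
  rewrite mxE (eq_bigr (fun a => u (widen a) * rbar (widen a) (widen b))); last first.
    by move=> a _; rewrite mxE rbar_widen.
  have := ker_rbar (widen b); rewrite big_ord_recr /= rbar_Zl mulr0 addr0 => ->.
  by rewrite mul0r.
case: (unliftP iZ t) => [a ->|->]; last exact: (proj1 ker_Z_lq).
by rewrite lift_max; have := congr1 (fun M : 'rV[R]_n => M 0 a) v0; rewrite !mxE.
Qed.

End MetricKernel.

Lemma gmat_unit y : 0 < qf r y -> gmat r g y \in unitmx.
Proof.
move=> qy; rewrite -row_free_unit -kermx_eq0; apply/eqP/row_matrixP => i; rewrite row0.
have := sub_kermxP (row_sub i (kermx (gmat r g y))).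
move: (row i _) => w wg0; apply/rowP => t; rewrite [RHS]mxE.
apply: (ker_eq0 qy (u := w 0)) => p.
have := congr1 (fun M : 'M[R]_(1, n.+1) => M 0 p) wg0; rewrite !mxE => wp.
by rewrite -[RHS]wp; apply: eq_bigr => s _; rewrite mxE.
Qed.

Lemma Cmixed_cone y p t s : 0 < qf r y -> Cmixed r g p t s y = Cmixed_form y p s t.
Proof.
move=> qy; pose C : 'cV[R]_n.+1 := \col_u Cartan r g p u s y.
pose X : 'cV[R]_n.+1 := \col_u Cmixed_form y p s u.
have gX : gmat r g y *m X = C.
  apply/colP => i; rewrite !mxE Cartan_cone // -(gmet_Cmixed_form qy p s i).
  by apply: eq_bigr => u _; rewrite !mxE.
have -> : Cmixed r g p t s y = (ginv r g y *m C) t 0.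
  by rewrite mxE /Cmixed; apply: eq_bigr => u _; rewrite mxE.
by rewrite -gX /ginv mulKmx ?gmat_unit // mxE.
Qed.

Lemma sum_Cartan_Cmixed y p q r1 s1 : 0 < qf r y ->
  \sum_t Cartan r g t q r1 y * Cmixed r g p t s1 y =
  g ^+ 2 * J2 y / (4 * Bf r g y) *
  ((mq q r1 y + 2 * kvec q y * kvec r1 y / Bf r g y)
     * (mq p s1 y + 2 * kvec p y * kvec s1 y / Bf r g y)
   + (kvec r1 y * kvec s1 y * mq p q y + kvec p y * kvec r1 y * mq q s1 y
      + kvec q y * kvec s1 y * mq p r1 y + kvec p y * kvec q y * mq r1 s1 y)
     / Bf r g y).
Proof.
move=> qy; have B0 : Bf r g y != 0 by rewrite lt0r_neq0 ?Bf_gt0.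
rewrite (eq_bigr (fun t =>
  (g * J2 y / (2 * Bf r g y) * kvec r1 y * mq t q y
   + g * J2 y / (2 * Bf r g y) * kvec q y * mq t r1 y
   + (g * J2 y / (2 * Bf r g y) * mq q r1 y + g * J2 y / Bf r g y ^+ 2 * kvec q y * kvec r1 y)
     * kvec t y) * Cmixed_form y p s1 t)); last first.
  move=> t _; rewrite Cmixed_cone // Cartan_cone // /Cform.
  by rewrite (mqC q r1) (mqC t q) (mqC t r1); ring.
rewrite /Cmixed_form sum_mul_comb3 !mq_Pvec // !kvec_Pvec // !mq_Kvec // kvec_Kvec //.
by rewrite (mqC s1 q) (mqC s1 r1); field.
Qed.

Lemma Scurv_cone y p q r1 s1 : 0 < qf r y ->
  Scurv r g p q r1 s1 y =
    (- (g ^+ 2 / 4)) *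
    ((hang r g p r1 y * hang r g q s1 y - hang r g p s1 y * hang r g q r1 y) / K2 r g y).
Proof.
move=> qy; have B0 : Bf r g y != 0 by rewrite lt0r_neq0 ?Bf_gt0.
rewrite /Scurv sumrB [X in X - _](sum_Cartan_Cmixed p q r1 s1 qy).
rewrite [X in _ - X](sum_Cartan_Cmixed p q s1 r1 qy) !hang_cone // K2_cone // (mqC s1 r1).
by field; rewrite B0 J2_neq0.
Qed.

End Finsleroid.

Theorem theorem2p2 (R : realType) (n : nat) (r : 'M[R]_n) (g : R)
  (x : 'rV[R]_n.+1) :
  (0 < n)%N ->
  r^T = r ->
  (forall v : 'rV[R]_n, v != 0 -> 0 < (v *m r *m v^T) 0 0) ->
  -2 < g < 2 ->
  0 < qf r x ->
  forall p q r' s : 'I_n.+1,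
    Scurv r g p q r' s x =
      (- (g ^+ 2 / 4)) *
      ((hang r g p r' x * hang r g q s x - hang r g p s x * hang r g q r' x)
       / K2 r g x).
Proof.
move=> _ r_sym r_posdef g_bound qx p q r' s.
exact: Scurv_cone.
Qed.
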